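(* For every finite connected chordal graph $G$, the set $C^1(G)=\{v: e(v)\le\operatorname{rad}(G)+1\}$ is a tight upper certificate of $G$, i.e. $e(u)=\min_{x\in C^1(G)}(d(u,x)+e(x))$ for every vertex $u$.
   Context: A graph is chordal if every induced cycle of length at least 4 has a chord. $d$ shortest-path distance, $e(v)=\max_u d(v,u)$, $\operatorname{rad}(G)=\min_v e(v)$. *)

From mathcomp Require Import all_boot.
Set Implicit Arguments. Unset Strict Implicit. Unset Printing Implicit Defensive.

(* A finite simple graph: vertex set T : finType, adjacency e : rel T,
   assumed symmetric and irreflexive in the theorem. *)

Section Graph.
Variables (T : finType) (e : rel T).

Fixpoint ball (x : T) (k : nat) : {set T} :=
  if k is k'.+1 then ball x k' :|: [set y | [exists z in ball x k', e z y]]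
  else [set x].

(* shortest-path distance: least k (< #|T|) with y in ball x k
   (meaningful for connected graphs, where it always exists) *)
Definition dist (x y : T) : nat := find (fun k => y \in ball x k) (iota 0 #|T|).

Definition ecc (v : T) : nat := \max_(u : T) dist v u.

(* radius: min of eccentricities (#|T| is an upper bound for every ecc) *)
Definition rad : nat := \big[minn/#|T|]_(v : T) ecc v.

Definition connected_graph : Prop := forall x y : T, connect e x y.

(* chordal: every cycle of length >= 4 (distinct vertices) has a chord,
   i.e. an edge between two vertices that are not consecutive on the cycle.
   (Equivalent to: every induced cycle has length 3.) *)
Definition chordal : Prop :=
  forall s : seq T, uniq s -> 4 <= size s -> cycle e s ->
    exists x y, [&& x \in s, y \in s, x != y,
      y != next s x, x != next s y & e x y].

Definition C1 : {set T} := [set v | ecc v <= rad + 1].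

End Graph.

From mathcomp Require Import all_boot zify.

Set Implicit Arguments. Unset Strict Implicit. Unset Printing Implicit Defensive.

(* Fix a vertex c with e(c) <= rad. It suffices that every v with
   e(v) >= e(c) + 2 has a neighbour of smaller eccentricity: walking from u
   along such neighbours until C^1 is reached lowers e by exactly one per
   step, so e(u) = d(u,x) + e(x) at the end.

   Chordality enters through one fact about the BFS levels from a root: two
   vertices of level i joined by a walk whose inner vertices all lie above
   level i are equal or adjacent, since otherwise a shortest such walk and a
   shortest walk through the levels below i close a chordless cycle.  Hence
   adjacent vertices of one level have a common neighbour one level lower,
   and if a ~ b with b one level above a and d(a,x) = d(b,x) + 1, then x lies
   at level at least lv(a) + d(b,x).

   With root c, the second consequence shows that every neighbour w of v one
   step closer to c satisfies d(w,z) <= max(d(v,z), e(v) - 2).  Taking as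
   roots the vertices z at distance e(v) from v, the two consequences show
   that each such z has such a w with d(w,z) = e(v) - 1, and that these
   witnesses can be exchanged pairwise; a Helly-type argument then yields
   one w serving all z at once. *)

Lemma next_nth_uniq (T : eqType) (x0 : T) s j :
  uniq s -> j < size s -> next s (nth x0 s j) = nth x0 s (j.+1 %% size s).
Proof.
case: s => // x s uq js; rewrite next_nth mem_nth // index_uniq //=.
move: js => /= js.
case: (ltnP j.+1 (size s).+1) => js'.
  by rewrite modn_small // (set_nth_default x0).
have -> : j = size s by lia.
by rewrite modnn nth_default.
Qed.

Lemma pairwise_common_witness (A : Type) (B : finType) (P : A -> Prop)
    (F : pred B) (R : A -> B -> bool) :
  (exists a, P a) -> {in F, forall b, exists2 a, P a & R a b} ->
  (forall a1 a2 b1 b2, P a1 -> P a2 -> b1 \in F -> b2 \in F ->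
     R a1 b1 -> R a2 b2 -> R a1 b2 || R a2 b1) ->
  exists2 a, P a & {in F, forall b, R a b}.
Proof.
move=> [a0 Pa0] cover pair.
suff [a Pa Ra] : exists2 a, P a & {in enum F, forall b, R a b}.
  by exists a => // b bF; apply: Ra; rewrite mem_enum.
have : {subset enum F <= F} by move=> b; rewrite mem_enum.
elim: (enum F) => [|b s IH] sF; first by exists a0.
have sF' : {subset s <= F} by move=> c cs; apply: sF; rewrite inE cs orbT.
have [a Pa Ra] := IH sF'.
have bF := sF b (mem_head b s).
have [a' Pa' Ra'b] := cover b bF.
case Rab: (R a b).
  by exists a => // c; rewrite inE => /orP[/eqP -> | /Ra].
exists a' => // c; rewrite inE => /orP[/eqP -> // | cs].
have := pair a a' c b Pa Pa' (sF' c cs) bF (Ra c cs) Ra'b.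
by rewrite Rab.
Qed.

Section ChordalEccentricity.
Variables (T : finType) (e : rel T).
Hypotheses (sym_e : symmetric e) (irr_e : irreflexive e).

Definition touch (x y : T) : bool := (x == y) || e x y.

Lemma touchC x y : touch x y = touch y x.
Proof. by rewrite /touch eq_sym sym_e. Qed.

Lemma ball_le x y k k' : k <= k' -> y \in ball e x k -> y \in ball e x k'.
Proof.
move=> /subnK <-; elim: (k' - k) => // d IH /IH.
by rewrite addSn /= inE => ->.
Qed.

Lemma ball_edge x y z k : y \in ball e x k -> e y z -> z \in ball e x k.+1.
Proof.
by move=> yk eyz; rewrite /= !inE; apply/orP; right; apply/existsP; exists y; rewrite yk.
Qed.

Lemma ballS x z k : z \in ball e x k.+1 -> exists2 y, y \in ball e x k & touch y z.
Proof.
rewrite /= !inE => /orP[zk | /existsP[y /andP[yk eyz]]].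
  by exists z; rewrite /touch ?eqxx.
by exists y; rewrite /touch ?eyz ?orbT.
Qed.

Lemma ball_trans x y z n m :
  y \in ball e x n -> z \in ball e y m -> z \in ball e x (n + m).
Proof.
move=> yn; elim: m z => [|m IH] z; first by rewrite addn0 inE => /eqP ->.
case/ballS => w /IH wnm /orP[/eqP <- | ewz]; first by apply: ball_le wnm; lia.
by rewrite addnS; apply: ball_edge wnm ewz.
Qed.

Lemma ball_sym x y n : y \in ball e x n -> x \in ball e y n.
Proof.
elim: n y => [|n IH] y; first by rewrite !inE eq_sym.
case/ballS => z /IH xz /orP[/eqP <- | ezy]; first exact: ball_le (leqnSn n) xz.
rewrite -add1n; apply: ball_trans xz.
by apply: (@ball_edge y y); rewrite ?inE // sym_e.
Qed.

Lemma ball_path x p : path e x p -> last x p \in ball e x (size p).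
Proof.
elim/last_ind: p => [|p z IH]; first by rewrite inE.
rewrite rcons_path last_rcons size_rcons => /andP[/IH px ez].
exact: ball_edge px ez.
Qed.

Hypothesis conn : connected_graph e.

Lemma ball_card x y : y \in ball e x #|T|.-1.
Proof.
move/connectP: (conn x y) => [p /shortenP[p' p'path /card_uniqP p'uniq _] ->].
apply: ball_le (ball_path p'path).
by have := max_card (mem (x :: p')); rewrite p'uniq /=; lia.
Qed.

Lemma has_ball x y : has (fun k => y \in ball e x k) (iota 0 #|T|).
Proof.
apply/hasP; exists #|T|.-1; last exact: ball_card.
have : 0 < #|T| by apply/card_gt0P; exists x.
by rewrite mem_iota; lia.
Qed.

Lemma dist_lt_card x y : dist e x y < #|T|.
Proof. by have := has_ball x y; rewrite has_find size_iota. Qed.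

Lemma ball_dist x y : y \in ball e x (dist e x y).
Proof. by have := nth_find 0 (has_ball x y); rewrite nth_iota ?dist_lt_card. Qed.

Lemma dist_leE x y k : (dist e x y <= k) = (y \in ball e x k).
Proof.
apply/idP/idP => [le | yk]; first exact: ball_le le (ball_dist x y).
rewrite leqNgt; apply/negP => lt.
have [kT | Tk] := ltnP k #|T|; last by have := dist_lt_card x y; lia.
by have := before_find 0 lt; rewrite nth_iota // yk.
Qed.

Lemma dist_sym x y : dist e x y = dist e y x.
Proof.
by apply/eqP; rewrite eqn_leq !dist_leE; apply/andP; split; apply: ball_sym; apply: ball_dist.
Qed.

Lemma dist_triangle x y z : dist e x z <= dist e x y + dist e y z.
Proof. by rewrite dist_leE; apply: ball_trans; apply: ball_dist. Qed.

Lemma dist0 x : dist e x x = 0.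
Proof. by apply/eqP; rewrite -leqn0 dist_leE inE. Qed.

Lemma dist_eq0 x y : dist e x y = 0 -> x = y.
Proof. by move=> d0; have := ball_dist x y; rewrite d0 inE => /eqP. Qed.

Lemma touchE x y : touch x y = (dist e x y <= 1).
Proof.
rewrite dist_leE; apply/idP/idP => [/orP[/eqP <- | exy] | /ballS[z]].
- by rewrite !inE eqxx.
- by apply: ball_edge exy; rewrite inE.
- by rewrite inE => /eqP ->.
Qed.

Lemma dist_edge x a b : e a b -> dist e x b <= (dist e x a).+1.
Proof.
move=> eab; have := dist_triangle x a b.
have : touch a b by rewrite /touch eab orbT.
rewrite touchE; lia.
Qed.

Lemma dist_prev x y n : dist e x y = n.+1 -> exists2 z, dist e x z = n & e z y.
Proof.
move=> dxy; have := ball_dist x y; rewrite dxy => /ballS[z zn /orP[/eqP zy | ezy]].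
  by move: zn; rewrite zy -dist_leE dxy ltnn.
by exists z => //; rewrite -dist_leE in zn; have := dist_edge x ezy; lia.
Qed.

Lemma dist_le_ecc v u : dist e v u <= ecc e v.
Proof. exact: (@leq_bigmax T (dist e v)). Qed.

Lemma ecc_le v k : (forall u, dist e v u <= k) -> ecc e v <= k.
Proof. by move=> vk; apply/bigmax_leqP. Qed.

Lemma ecc_triangle u x : ecc e u <= dist e u x + ecc e x.
Proof.
by apply: ecc_le => z; apply: leq_trans (dist_triangle u x z) _; rewrite leq_add2l dist_le_ecc.
Qed.

Definition walk_in (P : pred T) (x y : T) (n : nat) : Prop :=
  exists f : nat -> T, [/\ f 0 = x, f n = y,
    forall j, j < n -> e (f j) (f j.+1) & forall j, 0 < j < n -> P (f j)].

Lemma walk_in0 P x : walk_in P x x 0.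
Proof. by exists (fun=> x); split=> // j; lia. Qed.

Lemma walk_in_edge P x y : e x y -> walk_in P x y 1.
Proof.
by move=> exy; exists (fun j => if j is 0 then x else y); split=> // [[]|j] //; lia.
Qed.

Lemma walk_in_sub (P Q : pred T) x y n :
  {subset P <= Q} -> walk_in P x y n -> walk_in Q x y n.
Proof. by move=> PQ [f [f0 fn fe fP]]; exists f; split=> // j /fP /PQ. Qed.

Lemma walk_in_rev P x y n : walk_in P x y n -> walk_in P y x n.
Proof.
case=> f [f0 fn fe fP]; exists (fun j => f (n - j)); split.
- by rewrite subn0.
- by rewrite subnn.
- move=> j jn; rewrite sym_e; have -> : n - j = (n - j.+1).+1 by lia.
  by apply: fe; lia.
- by move=> j jn; apply: fP; lia.
Qed.

Lemma walk_in_cat P x y z n m :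
  walk_in P x y n -> walk_in P y z m -> P y -> walk_in P x z (n + m).
Proof.
case=> f [f0 fn fe fP] [g [g0 gm ge gP]] Py.
exists (fun j => if j <= n then f j else g (j - n)); split.
- by rewrite leq0n.
- case: ifP => [nm|_]; last by rewrite addKn.
  have m0 : m = 0 by lia.
  by subst m; rewrite addn0 fn -g0 gm.
- move=> j jnm; case: ifP => jn; case: ifP => j1n.
  + exact: fe.
  + have -> : j = n by lia.
    by rewrite subSnn fn -g0; apply: ge; lia.
  + lia.
  + by rewrite subSn; [apply: ge | ]; lia.
- move=> j jnm; case: ifP => jn; last by apply: gP; lia.
  case: (ltnP j n) => [jn'|nj]; first by apply: fP; lia.
  have jn' : j = n by lia.
  by rewrite jn' fn.
Qed.

(* The walk jumps from position [j] to [j + d + 1], or stops at [j] if [j + d = n]. *)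
Lemma walk_in_shortcut (P : pred T) f n j d :
  (forall l, l < n -> e (f l) (f l.+1)) -> (forall l, 0 < l < n -> P (f l)) ->
  j + d <= n -> (if j + d < n then e (f j) (f (j + d).+1) else f j == f n) ->
  walk_in P (f 0) (f n) (n - d).
Proof.
move=> fe fP jdn link.
exists (fun l => if l <= j then f l else f (l + d)); split.
- by rewrite leq0n.
- case: ifP => nj; last by rewrite subnK //; lia.
  have -> : n - d = j by lia.
  have jdn' : j + d = n by lia.
  by move: link; rewrite jdn' ltnn => /eqP.
- move=> l ln; case: ifP => lj; case: ifP => l1j.
  + by apply: fe; lia.
  + have -> : l = j by lia.
    by move: link; rewrite addSn ifT //; lia.
  + lia.
  + by rewrite addSn; apply: fe; lia.
- by move=> l ln; case: ifP => lj; apply: fP; lia.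
Qed.

Definition chordless (f : nat -> T) (n : nat) : Prop :=
  forall j j', j.+1 < j' <= n -> ~~ touch (f j) (f j').

Lemma walk_in_chordless P x y n : walk_in P x y n ->
  exists k f, [/\ f 0 = x, f k = y, forall j, j < k -> e (f j) (f j.+1),
    forall j, 0 < j < k -> P (f j) & chordless f k].
Proof.
elim/ltn_ind: n x y => n IH x y [f [f0 fn fe fP]].
case: (pickP (fun p : 'I_n.+1 * 'I_n.+1 => (p.1.+1 < p.2) && touch (f p.1) (f p.2))).
  move=> [[j jn] [j' j'n]] /= /andP[jj' t].
  have [d d0 w] : exists2 d, 0 < d <= n & walk_in P x y (n - d).
    rewrite -f0 -fn; case/orP: t => [/eqP fjj' | efj].
      exists (j' - j); first lia.
      apply: (walk_in_shortcut (j := j)) => //; rewrite subnKC; try lia.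
      case: ltnP => j'n'; rewrite fjj'; first exact: fe.
      by have -> : j' = n by lia.
    exists (j' - j).-1; first lia.
    apply: (walk_in_shortcut (j := j)) => //; first lia.
    have -> : (j + (j' - j).-1).+1 = j' by lia.
    by rewrite ifT //; lia.
  by apply: (IH (n - d)) w; lia.
move=> induced; exists n, f; split=> // j j' /andP[jj' j'n].
have jn : j < n.+1 by lia.
by move: (induced (Ordinal jn, Ordinal (j'n : j' < n.+1))); rewrite /= jj' /= => ->.
Qed.

Hypothesis ch : chordal e.

Lemma chordal_cycle_touch (f : nat -> T) m : 4 <= m ->
  (forall j, j < m -> e (f j) (f (j.+1 %% m))) ->
  exists j j', [/\ j.+1 < j' < m, (0 < j) || (j'.+1 < m) & touch (f j) (f j')].
Proof.
move=> m4 fe; set s := mkseq f m.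
have ss : size s = m by rewrite size_mkseq.
have nthE j : j < m -> nth (f 0) s j = f j by move=> jm; rewrite nth_mkseq.
suff [j [j' [jj' j'm t nj' nj]]] : exists j j', [/\ j < j', j' < m, touch (f j) (f j'),
    f j' != f (j.+1 %% m) & f j != f (j'.+1 %% m)].
  exists j, j'; rewrite j'm andbT; split=> //.
  - rewrite ltn_neqAle jj' andbT; apply: contraNneq nj' => j'E.
    by rewrite -j'E modn_small ?j'E.
  - case: (posnP j) => [j0|//]; rewrite ltn_neqAle j'm andbT.
    by apply: contraNneq nj => ->; rewrite modnn j0.
have [uq | /(uniqPn (f 0)) [j [j' [jj' j'm fjj']]]] := boolP (uniq s); last first.
  rewrite ss in j'm; rewrite !nthE in fjj'; try lia.
  exists j, j'; rewrite /touch fjj' eqxx; split=> //.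
  - have jm : j < m by lia.
    by apply: contraTneq (fe j jm) => <-; rewrite fjj' irr_e.
  - by apply: contraTneq (fe j' j'm) => <-; rewrite irr_e.
have nextE j : j < m -> next s (f j) = f (j.+1 %% m).
  move=> jm; rewrite -nthE // next_nth_uniq ?ss // nthE //.
  by rewrite ltn_mod; lia.
have cyc : cycle e s.
  apply: cycle_from_next => // _ /(nthP (f 0)) [j jm <-].
  by rewrite ss in jm; rewrite nthE // nextE //; apply: fe.
have s4 : 4 <= size s by rewrite ss.
have [x [y /and5P [xs ys xy ynx /andP [xny exy]]]] := ch uq s4 cyc.
move: xs ys => /(nthP (f 0)) [i im <-] /(nthP (f 0)) [i' i'm <-] in xy ynx xny exy *.
rewrite ss in im i'm; rewrite !nthE // in xy ynx xny exy *; rewrite !nextE // in ynx xny.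
case: (ltngtP i i') => [ii'|i'i|ii']; last by rewrite ii' eqxx in xy.
- by exists i, i'; rewrite /touch exy orbT.
- by exists i', i; rewrite /touch sym_e exy orbT.
Qed.

(* Shortest such walks are chordless, and together they form a chordless cycle. *)
Lemma chordal_separated (A B : pred T) x y n m :
  (forall a b, A a -> B b -> ~~ touch a b) -> ~~ touch x y ->
  walk_in A x y n -> walk_in B y x m -> False.
Proof.
move=> sepAB nxy /walk_in_chordless [{}n [f [f0 fn fe fA find]]].
move=> /walk_in_chordless [{}m [g [g0 gm ge gB gind]]].
have n2 : 1 < n.
  case: n fn fe {fA find} => [|[|n]] fn fe //; move: nxy; rewrite -f0 -fn /touch.
    by rewrite eqxx.
  by rewrite fe ?orbT.
have m2 : 1 < m.
  case: m gm ge {gB gind} => [|[|m]] gm ge //; move: nxy; rewrite touchC -g0 -gm /touch.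
    by rewrite eqxx.
  by rewrite ge ?orbT.
pose h l := if l <= n then f l else g (l - n).
have hf l : l <= n -> h l = f l by rewrite /h => ->.
have hg l : n <= l -> h l = g (l - n).
  rewrite /h; case: ifP => // ln nl; have ->: l = n by lia.
  by rewrite subnn fn g0.
have [|l lnm|j [j' [/andP[jj' j'nm] nend t]]] := @chordal_cycle_touch h (n + m); first lia.
  case: (ltnP l.+1 (n + m)) => l1.
    rewrite modn_small //; case: (ltnP l n) => ln.
      by rewrite !hf ?(ltnW ln) //; apply: fe.
    by rewrite !hg ?subSn //; [apply: ge | ]; lia.
  have -> : l.+1 = n + m by lia.
  rewrite modnn (hf 0) // hg; last lia.
  have -> : l - n = m.-1 by lia.
  by rewrite f0 -gm -{2}(prednK (ltnW m2)); apply: ge; lia.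
case: (leqP j' n) => j'n.
  by move: t; rewrite !hf ?(negbTE (find _ _ _)) //; lia.
case: (leqP n j) => nj.
  by move: t; rewrite !hg ?(negbTE (gind _ _ _)) //; lia.
rewrite hf ?hg in t; try lia.
case: (posnP j) => j0.
  move: t; rewrite j0 f0 -gm touchC (negbTE (gind _ _ _)) //; lia.
by move: t; rewrite (negbTE (sepAB _ _ (fA _ _) (gB _ _))) //; lia.
Qed.

Section Levels.
Variable r : T.
Local Notation lv := (dist e r).

Lemma walk_in_root n z : lv z = n -> walk_in (fun w => lv w < n) z r n.
Proof.
elim: n z => [|n IH] z zn; first by rewrite -(dist_eq0 zn); apply: walk_in0.
have [z' z'n ez'z] := dist_prev zn; rewrite -add1n.
apply: (walk_in_cat (y := z')); last by rewrite /= z'n.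
  by apply: walk_in_edge; rewrite sym_e.
by apply: walk_in_sub (IH z' z'n) => w /= /ltnW.
Qed.

Lemma touch_of_walk_above i x y n : lv x = i -> lv y = i ->
  walk_in (fun z => i < lv z) x y n -> touch x y.
Proof.
move=> lx ly w; apply/negPn/negP => nxy.
case: i lx ly w => [|i] lx ly w.
  by move: nxy; rewrite -(dist_eq0 lx) -(dist_eq0 ly) /touch eqxx.
apply: (chordal_separated (B := fun z => lv z <= i) (m := i.+1 + i.+1) _ nxy w).
  move=> a b ia bi; rewrite touchE dist_sym -ltnNge.
  by have := dist_triangle r b a; lia.
apply: walk_in_cat (walk_in_root ly) (walk_in_rev (walk_in_root lx)) _.
by rewrite /= dist0.
Qed.

Lemma common_lower_neighbour a b n : e a b -> lv a = n.+1 -> lv b = n.+1 ->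
  exists2 t, lv t = n & e t a && e t b.
Proof.
move=> eab la lb.
have [a' la' ea'a] := dist_prev la; have [b' lb' eb'b] := dist_prev lb.
have : touch a' b'.
  apply: (touch_of_walk_above la' lb' (n := 1 + (1 + 1))).
  apply: (walk_in_cat (walk_in_edge _ ea'a)); last by rewrite /= la.
  apply: (walk_in_cat (walk_in_edge _ eab)); last by rewrite /= lb.
  by apply: walk_in_edge; rewrite sym_e.
case/orP=> [/eqP a'b' | ea'b']; first by exists a'; rewrite // ea'a a'b'.
case eab': (e a b'); first by exists b'; rewrite // sym_e eab'.
case eba': (e b a'); first by exists a'; rewrite // ea'a sym_e.
have [|j|j [j' [/andP[jj' j'4] nend]]] :=
  @chordal_cycle_touch (nth a [:: a; b; b'; a']) 4 => //.
  by case: j => [|[|[|[|j]]]] //= _; rewrite sym_e.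
case: j j' jj' j'4 nend => [|[|[|j]]] [|[|[|[|j']]]] //= _ _ _.
- by rewrite /touch eab' orbF => /eqP ab'; move: la; rewrite ab' lb'; lia.
- by rewrite /touch eba' orbF => /eqP ba'; move: lb; rewrite ba' la'; lia.
Qed.

Section UpperEdge.
Variables a b : T.
Hypotheses (eab : e a b) (lab : lv b = (lv a).+1).

Let reach z := lv a < lv z /\ exists n, walk_in (fun w => lv a < lv w) a z n.

Lemma reach_edge z z' : reach z -> e z z' -> lv a < lv z' -> reach z'.
Proof.
move=> [az [n w]] ezz' az'; split=> //; exists (n + 1).
exact: walk_in_cat w (walk_in_edge _ ezz') az.
Qed.

Lemma reach_touch z z' : reach z -> e z z' -> lv z' = lv a -> touch a z'.
Proof.
move=> [az [n w]] ezz' lz'.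
exact: touch_of_walk_above (erefl _) lz' (walk_in_cat w (walk_in_edge _ ezz') az).
Qed.

Lemma reach_geodesic m z : dist e b z = m -> dist e a z = m.+1 -> reach z.
Proof.
elim: m z => [|m IH] z bz az.
  by rewrite -(dist_eq0 bz); split; [rewrite lab | exists 1; apply: walk_in_edge].
have [z' bz' ez'z] := dist_prev bz.
have ab : dist e a b <= 1 by rewrite -touchE /touch eab orbT.
have az' : dist e a z' = m.+1.
  by have := dist_edge a ez'z; have := dist_triangle a b z'; lia.
have rz' := IH z' bz' az'.
have lzz' : lv z' <= (lv z).+1 by apply: dist_edge; rewrite sym_e.
have [az'l _] := rz'.
have [lz | lz] : lv a < lv z \/ lv z = lv a by lia.
  exact: reach_edge rz' ez'z lz.
by have := reach_touch rz' ez'z lz; rewrite touchE az.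
Qed.

Lemma dist_reach n z : lv z = n -> reach z -> dist e a z <= (n - lv a).+1.
Proof.
elim: n z => [|n IH] z lz rz; first by case: rz; rewrite lz.
have [z'' lz'' ez''z] := dist_prev lz.
have ezz'' : e z z'' by rewrite sym_e.
have := dist_edge a ez''z; case: (ltngtP (lv a) n) => [an | na | an].
- by have := IH z'' lz'' (reach_edge rz ezz'' _); rewrite lz''; lia.
- by case: rz; lia.
- by have := reach_touch rz ezz'' _; rewrite touchE lz'' an; lia.
Qed.
End UpperEdge.

Lemma level_add_dist_le a b x : e a b -> lv b = (lv a).+1 ->
  dist e a x = (dist e b x).+1 -> lv a + dist e b x <= lv x.
Proof.
move=> eab lab ax; have rx := reach_geodesic eab lab (erefl _) ax.
by have := dist_reach eab lab (erefl _) rx; case: rx; lia.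
Qed.
End Levels.

Section Descent.
Variables v c : T.
Hypothesis ecc_gap : (ecc e c).+2 <= ecc e v.

Let k := ecc e v.
Let towards w := e v w && ((dist e c w).+1 == dist e c v).

Lemma one_lt_dist_cv : 1 < dist e c v.
Proof. by have := ecc_triangle v c; rewrite dist_sym; lia. Qed.

Lemma towards_exists : exists w, towards w.
Proof.
have cv : dist e c v = (dist e c v).-1.+1 by have := one_lt_dist_cv; lia.
have [w cw ewv] := dist_prev cv.
by exists w; rewrite /towards sym_e ewv cw -cv eqxx.
Qed.

Lemma towards_dist w z : towards w -> dist e w z <= maxn (dist e v z) (k - 2).
Proof.
move=> /andP[evw /eqP cw].
have ewv : e w v by rewrite sym_e.
have := dist_edge z evw; rewrite !(dist_sym z) => wz.
case: (leqP (dist e w z) (dist e v z)) => lt; first lia.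
have wzE : dist e w z = (dist e v z).+1 by lia.
have := level_add_dist_le ewv (esym cw) wzE.
by have := dist_le_ecc c z; have := one_lt_dist_cv; rewrite /k; lia.
Qed.

Lemma towards_dist_far w z : towards w -> dist e v z = k -> k.-1 <= dist e w z <= k.
Proof.
move=> tw vz; have [evw _] := andP tw.
have := towards_dist z tw; have := dist_edge z (_ : e w v); rewrite sym_e => /(_ evw).
by rewrite !(dist_sym z) vz /k; lia.
Qed.

Lemma towards_cover z : dist e v z = k -> exists2 w, towards w & dist e w z == k.-1.
Proof.
move=> vz; have [w0 tw0] := towards_exists.
case: (eqVneq (dist e w0 z) k.-1) => [w0z|w0z]; first by exists w0; rewrite ?w0z.
have {}w0z : dist e w0 z = k.
  by have := towards_dist_far tw0 vz; move/eqP: w0z; lia.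
have k_gt0 : 0 < k by have := ecc_gap; rewrite /k; lia.
have [evw0 /eqP cw0] := andP tw0.
have [t zt /andP[etv etw0]] : exists2 t, dist e z t = k.-1 & e t v && e t w0.
  by apply: common_lower_neighbour; rewrite // dist_sym ?vz ?w0z prednK.
exists t; last by rewrite dist_sym zt.
rewrite /towards sym_e etv /=; apply/eqP.
have d1 := dist_edge c etv.
have d2 : dist e c t <= (dist e c w0).+1 by apply: dist_edge; rewrite sym_e.
have [//|ct] : (dist e c t).+1 = dist e c v \/ dist e c t = (dist e c w0).+1 by lia.
have tzE : dist e w0 z = (dist e t z).+1 by rewrite w0z (dist_sym t) zt prednK.
have ew0t : e w0 t by rewrite sym_e.
have := level_add_dist_le ew0t ct tzE; rewrite (dist_sym t) zt.
by have := dist_le_ecc c z; have := one_lt_dist_cv; move: k_gt0; rewrite /k; lia.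
Qed.

Lemma towards_pairwise w1 w2 z1 z2 : towards w1 -> towards w2 ->
  dist e v z1 = k -> dist e v z2 = k ->
  dist e w1 z1 == k.-1 -> dist e w2 z2 == k.-1 ->
  (dist e w1 z2 == k.-1) || (dist e w2 z1 == k.-1).
Proof.
move=> tw1 tw2 vz1 vz2 /eqP d1 /eqP d2.
case: eqP => //= n1; case: eqP => //= n2.
have e1 : dist e w1 z2 = k by have := towards_dist_far tw1 vz2; lia.
have e2 : dist e w2 z1 = k by have := towards_dist_far tw2 vz1; lia.
have k_gt0 : 0 < k by have := ecc_gap; rewrite /k; lia.
have [ev1 /eqP cw1] := andP tw1; have [ev2 /eqP cw2] := andP tw2.
have : touch w1 w2.
  apply: (@touch_of_walk_above c (dist e c v).-1 _ _ (1 + 1)); try lia.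
  apply: (walk_in_cat (walk_in_edge _ _) (walk_in_edge _ ev2)).
    by rewrite sym_e.
  by rewrite /=; lia.
case/orP => [/eqP w12 | e12]; first by move: e2; rewrite -w12 d1; lia.
have e21 : e w2 w1 by rewrite sym_e.
have := @level_add_dist_le z2 w2 w1 z1 e21.
rewrite !(dist_sym z2) e1 d2 e2 d1 prednK // => /(_ erefl erefl).
have := dist_triangle z2 c z1; have := dist_le_ecc c z1; have := dist_le_ecc c z2.
by rewrite (dist_sym z2 c) (dist_sym z1 z2); have := ecc_gap; rewrite /k; lia.
Qed.

Lemma ecc_neighbour_lt : exists2 w, e v w & ecc e w < ecc e v.
Proof.
have [w tw wF] := @pairwise_common_witness T T towards (fun z => dist e v z == k)
  (fun w z => dist e w z == k.-1) towards_exists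
  (fun z vz => towards_cover (eqP vz))
  (fun w1 w2 z1 z2 tw1 tw2 vz1 vz2 => towards_pairwise tw1 tw2 (eqP vz1) (eqP vz2)).
exists w; first by case/andP: tw.
suff : ecc e w <= k.-1 by have := ecc_gap; rewrite /k; lia.
apply: ecc_le => z; have [vz | vz] := eqVneq (dist e v z) k.
  by have /eqP -> := wF z (introT eqP vz).
by have := towards_dist z tw; have := dist_le_ecc v z; move/eqP: vz; rewrite /k; lia.
Qed.
End Descent.

Lemma exists_ecc_le_rad (u : T) : exists c, ecc e c <= rad e.
Proof.
rewrite /rad; elim/big_ind: _ => [|m n [c cm] [c' c'n]|c _]; last by exists c.
  by exists u; apply: ecc_le => z; apply: ltnW; apply: dist_lt_card.
by case: (leqP m n) => mn; [exists c | exists c']; lia.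
Qed.

Lemma ecc_C1_attained u : exists2 x, x \in C1 e & ecc e u = dist e u x + ecc e x.
Proof.
have [c c_rad] := exists_ecc_le_rad u.
elim/ltn_ind: {u}(ecc e u) {-2}u (erefl (ecc e u)) => n IH u un.
have [uC | uC] := leqP (ecc e u) (rad e + 1).
  by exists u; rewrite ?inE ?dist0.
have gap : (ecc e c).+2 <= ecc e u by lia.
have [w euw wu] := ecc_neighbour_lt gap.
have [x xC wx] := IH _ (leq_trans wu (eq_leq un)) w erefl.
exists x => //; apply/eqP; rewrite eqn_leq ecc_triangle /=.
have ewu : e w u by rewrite sym_e.
by have := dist_edge x ewu; rewrite !(dist_sym x); lia.
Qed.
End ChordalEccentricity.

Theorem proposition9 (T : finType) (e : rel T) :
  symmetric e -> irreflexive e -> 0 < #|T| ->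
  connected_graph e -> chordal e ->
  forall u : T,
    (forall x, x \in C1 e -> ecc e u <= dist e u x + ecc e x) /\
    (exists2 x, x \in C1 e & ecc e u = dist e u x + ecc e x).
Proof.
move=> sym_e irr_e _ conn ch u; split; first by move=> x _; apply: ecc_triangle.
exact: ecc_C1_attained.
Qed.
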